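(* Let $\mathcal{C}$ be a cartesian bicategory. Then $\mathcal{C}$ is a peircean bicategory (for some choice of Boolean algebra structures on its homsets) if and only if the functor $\mathcal{C}[-,I]:\mathsf{Map}(\mathcal{C})^{op}\to\mathsf{InfSl}$, $X\mapsto\mathcal{C}[X,I]$, $f\mapsto(c\mapsto f;c)$, is a boolean hyperdoctrine.
   Context: Composition in diagrammatic order. A cartesian bicategory is a poset-enriched symmetric monoidal category $(\mathcal{C},\otimes,I)$ with, for each $X$, a commutative comonoid $(\mathrm{copy}_X,\mathrm{disc}_X)$ and commutative monoid $(\mathrm{cocopy}_X,\mathrm{codisc}_X)$, such that every arrow $c:X\to Y$ satisfies $c;\mathrm{copy}_Y\le\mathrm{copy}_X;(c\otimes c)$, $c;\mathrm{disc}_Y\le\mathrm{disc}_X$; the comonoid is left adjoint to the monoid ($\mathrm{id}_X\le\mathrm{copy}_X;\mathrm{cocopy}_X$, $\mathrm{cocopy}_X;\mathrm{copy}_X\le\mathrm{id}$, $\mathrm{id}_X\le\mathrm{disc}_X;\mathrm{codisc}_X$, $\mathrm{codisc}_X;\mathrm{disc}_X\le\mathrm{id}_I$); they form special Frobenius bimonoids; and standard coherence conditions hold. A map is an arrow $f:X\to Y$ with $\mathrm{copy}_X;(f\otimes f)\le f;\mathrm{copy}_Y$ and $\mathrm{disc}_X\le f;\mathrm{disc}_Y$; maps form a category $\mathsf{Map}(\mathcal{C})$ with finite products. A peircean bicategory is a cartesian bicategory whose homsets carry Boolean algebra structures (whose order is the given one) such that $f;\neg c=\neg(f;c)$ for every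 map $f:X\to Y$ and arrow $c:Y\to Z$. An elementary and existential doctrine is a functor $P:\mathcal{C}^{op}\to\mathsf{InfSl}$ ($\mathcal{C}$ with finite products) with equality predicates $\delta_Y\in P(Y\times Y)$ such that $\alpha\mapsto P_{\langle\pi_1,\pi_2\rangle}(\alpha)\wedge P_{\langle\pi_2,\pi_3\rangle}(\delta_Y)$ is left adjoint to $P_{\mathrm{id}_X\times\Delta_Y}$, and with left adjoints $\exists_{\pi_X}\dashv P_{\pi_X}$ along projections satisfying Beck–Chevalley and Frobenius reciprocity. A boolean hyperdoctrine is such a doctrine in which every $P(X)$ is a Boolean algebra and every $P_f$ a Boolean algebra homomorphism. *)

Set Implicit Arguments.
Unset Strict Implicit.

Record BoolAlgOn (T : Type) (le : T -> T -> Prop) := {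
  ba_meet : T -> T -> T;
  ba_join : T -> T -> T;
  ba_top : T;
  ba_bot : T;
  ba_neg : T -> T;
  ba_meetC : forall a b, ba_meet a b = ba_meet b a;
  ba_joinC : forall a b, ba_join a b = ba_join b a;
  ba_meetA : forall a b c, ba_meet a (ba_meet b c) = ba_meet (ba_meet a b) c;
  ba_joinA : forall a b c, ba_join a (ba_join b c) = ba_join (ba_join a b) c;
  ba_meet_absorb : forall a b, ba_meet a (ba_join a b) = a;
  ba_join_absorb : forall a b, ba_join a (ba_meet a b) = a;
  ba_meet_distr : forall a b c,
      ba_meet a (ba_join b c) = ba_join (ba_meet a b) (ba_meet a c);
  ba_join_distr : forall a b c,
      ba_join a (ba_meet b c) = ba_meet (ba_join a b) (ba_join a c);
  ba_meet_top : forall a, ba_meet a ba_top = a;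
  ba_join_bot : forall a, ba_join a ba_bot = a;
  ba_compl_meet : forall a, ba_meet a (ba_neg a) = ba_bot;
  ba_compl_join : forall a, ba_join a (ba_neg a) = ba_top;
  ba_order : forall a b, le a b <-> ba_meet a b = a
}.

Definition ba_hom (T U : Type) (leT : T -> T -> Prop) (leU : U -> U -> Prop)
  (A : BoolAlgOn leT) (B : BoolAlgOn leU) (h : T -> U) : Prop :=
  (forall a b, h (ba_meet A a b) = ba_meet B (h a) (h b)) /\
  (forall a b, h (ba_join A a b) = ba_join B (h a) (h b)) /\
  h (ba_top A) = ba_top B /\
  h (ba_bot A) = ba_bot B /\
  (forall a, h (ba_neg A a) = ba_neg B (h a)).

(* Cartesian bicategories (composition in diagrammatic order: f ; g).  *)
Record CartBicat := {
  ob : Type;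
  hom : ob -> ob -> Type;
  le : forall X Y, hom X Y -> hom X Y -> Prop;
  idm : forall X, hom X X;
  cmp : forall X Y Z, hom X Y -> hom Y Z -> hom X Z;
  tens : ob -> ob -> ob;
  tensm : forall X Y X' Y', hom X Y -> hom X' Y' -> hom (tens X X') (tens Y Y');
  unit_ob : ob;
  asc : forall X Y Z, hom (tens (tens X Y) Z) (tens X (tens Y Z));
  asc_inv : forall X Y Z, hom (tens X (tens Y Z)) (tens (tens X Y) Z);
  lun : forall X, hom (tens unit_ob X) X;
  lun_inv : forall X, hom X (tens unit_ob X);
  run : forall X, hom (tens X unit_ob) X;
  run_inv : forall X, hom X (tens X unit_ob);
  sym : forall X Y, hom (tens X Y) (tens Y X);
  copy : forall X, hom X (tens X X);
  disc : forall X, hom X unit_ob;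
  cocopy : forall X, hom (tens X X) X;
  codisc : forall X, hom unit_ob X;

  le_refl : forall X Y (f : hom X Y), le f f;
  le_trans : forall X Y (f g h : hom X Y), le f g -> le g h -> le f h;
  le_antisym : forall X Y (f g : hom X Y), le f g -> le g f -> f = g;
  cmp_mono : forall X Y Z (f f' : hom X Y) (g g' : hom Y Z),
      le f f' -> le g g' -> le (cmp f g) (cmp f' g');
  tensm_mono : forall X Y X' Y' (f f' : hom X Y) (g g' : hom X' Y'),
      le f f' -> le g g' -> le (tensm f g) (tensm f' g');

  cmpA : forall X Y Z W (f : hom X Y) (g : hom Y Z) (h : hom Z W),
      cmp f (cmp g h) = cmp (cmp f g) h;
  cmp_idl : forall X Y (f : hom X Y), cmp (idm X) f = f;
  cmp_idr : forall X Y (f : hom X Y), cmp f (idm Y) = f;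

  tensm_id : forall X Y, tensm (idm X) (idm Y) = idm (tens X Y);
  tensm_cmp : forall X Y Z X' Y' Z' (f : hom X Y) (g : hom Y Z)
      (f' : hom X' Y') (g' : hom Y' Z'),
      tensm (cmp f g) (cmp f' g') = cmp (tensm f f') (tensm g g');

  asc_iso1 : forall X Y Z, cmp (asc X Y Z) (asc_inv X Y Z) = idm _;
  asc_iso2 : forall X Y Z, cmp (asc_inv X Y Z) (asc X Y Z) = idm _;
  lun_iso1 : forall X, cmp (lun X) (lun_inv X) = idm _;
  lun_iso2 : forall X, cmp (lun_inv X) (lun X) = idm _;
  run_iso1 : forall X, cmp (run X) (run_inv X) = idm _;
  run_iso2 : forall X, cmp (run_inv X) (run X) = idm _;
  sym_inv : forall X Y, cmp (sym X Y) (sym Y X) = idm _;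

  asc_nat : forall X Y Z X' Y' Z' (f : hom X X') (g : hom Y Y') (h : hom Z Z'),
      cmp (tensm (tensm f g) h) (asc X' Y' Z') = cmp (asc X Y Z) (tensm f (tensm g h));
  lun_nat : forall X Y (f : hom X Y),
      cmp (tensm (idm unit_ob) f) (lun Y) = cmp (lun X) f;
  run_nat : forall X Y (f : hom X Y),
      cmp (tensm f (idm unit_ob)) (run Y) = cmp (run X) f;
  sym_nat : forall X Y X' Y' (f : hom X X') (g : hom Y Y'),
      cmp (tensm f g) (sym X' Y') = cmp (sym X Y) (tensm g f);

  pentagon : forall W X Y Z,
      cmp (cmp (tensm (asc W X Y) (idm Z)) (asc W (tens X Y) Z))
          (tensm (idm W) (asc X Y Z))
      = cmp (asc (tens W X) Y Z) (asc W X (tens Y Z));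
  triangle : forall X Y,
      cmp (asc X unit_ob Y) (tensm (idm X) (lun Y)) = tensm (run X) (idm Y);
  hexagon : forall X Y Z,
      cmp (cmp (asc X Y Z) (sym X (tens Y Z))) (asc Y Z X)
      = cmp (cmp (tensm (sym X Y) (idm Z)) (asc Y X Z)) (tensm (idm Y) (sym X Z));

  copy_assoc : forall X,
      cmp (cmp (copy X) (tensm (copy X) (idm X))) (asc X X X)
      = cmp (copy X) (tensm (idm X) (copy X));
  copy_unitl : forall X, cmp (cmp (copy X) (tensm (disc X) (idm X))) (lun X) = idm X;
  copy_unitr : forall X, cmp (cmp (copy X) (tensm (idm X) (disc X))) (run X) = idm X;
  copy_comm : forall X, cmp (copy X) (sym X X) = copy X;

  cocopy_assoc : forall X,
      cmp (tensm (cocopy X) (idm X)) (cocopy X)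
      = cmp (cmp (asc X X X) (tensm (idm X) (cocopy X))) (cocopy X);
  cocopy_unitl : forall X, cmp (cmp (lun_inv X) (tensm (codisc X) (idm X))) (cocopy X) = idm X;
  cocopy_unitr : forall X, cmp (cmp (run_inv X) (tensm (idm X) (codisc X))) (cocopy X) = idm X;
  cocopy_comm : forall X, cmp (sym X X) (cocopy X) = cocopy X;

  copy_lax : forall X Y (c : hom X Y), le (cmp c (copy Y)) (cmp (copy X) (tensm c c));
  disc_lax : forall X Y (c : hom X Y), le (cmp c (disc Y)) (disc X);

  adj_copy_unit : forall X, le (idm X) (cmp (copy X) (cocopy X));
  adj_copy_counit : forall X, le (cmp (cocopy X) (copy X)) (idm (tens X X));
  adj_disc_unit : forall X, le (idm X) (cmp (disc X) (codisc X));
  adj_disc_counit : forall X, le (cmp (codisc X) (disc X)) (idm unit_ob);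

  special : forall X, cmp (copy X) (cocopy X) = idm X;
  frobenius_l : forall X,
      cmp (cocopy X) (copy X)
      = cmp (cmp (tensm (idm X) (copy X)) (asc_inv X X X)) (tensm (cocopy X) (idm X));
  frobenius_r : forall X,
      cmp (cocopy X) (copy X)
      = cmp (cmp (tensm (copy X) (idm X)) (asc X X X)) (tensm (idm X) (cocopy X));

  copy_tens : forall X Y,
      copy (tens X Y)
      = cmp (tensm (copy X) (copy Y))
          (cmp (asc X X (tens Y Y))
          (cmp (tensm (idm X) (asc_inv X Y Y))
          (cmp (tensm (idm X) (tensm (sym X Y) (idm Y)))
          (cmp (tensm (idm X) (asc Y X Y))
               (asc_inv X Y (tens X Y))))));
  disc_tens : forall X Y,
      disc (tens X Y) = cmp (tensm (disc X) (disc Y)) (lun unit_ob);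
  copy_unit : copy unit_ob = lun_inv unit_ob;
  disc_unit : disc unit_ob = idm unit_ob;
  cocopy_tens : forall X Y,
      cocopy (tens X Y)
      = cmp (asc X Y (tens X Y))
          (cmp (tensm (idm X) (asc_inv Y X Y))
          (cmp (tensm (idm X) (tensm (sym Y X) (idm Y)))
          (cmp (tensm (idm X) (asc X Y Y))
          (cmp (asc_inv X X (tens Y Y))
               (tensm (cocopy X) (cocopy Y))))));
  codisc_tens : forall X Y,
      codisc (tens X Y) = cmp (lun_inv unit_ob) (tensm (codisc X) (codisc Y));
  cocopy_unit : cocopy unit_ob = lun unit_ob;
  codisc_unit : codisc unit_ob = idm unit_ob
}.

Arguments hom : clear implicits.
Arguments le {_} {X Y} _ _.
Arguments idm {_} X.
Arguments cmp {_} {X Y Z} _ _.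
Arguments tens {_} _ _.
Arguments tensm {_} {X Y X' Y'} _ _.
Arguments unit_ob {_}.
Arguments asc {_} X Y Z.
Arguments asc_inv {_} X Y Z.
Arguments lun {_} X.
Arguments lun_inv {_} X.
Arguments run {_} X.
Arguments run_inv {_} X.
Arguments sym {_} X Y.
Arguments copy {_} X.
Arguments disc {_} X.
Arguments cocopy {_} X.
Arguments codisc {_} X.

Section Doctrines.
Variable C : CartBicat.

(* Maps: arrows that are (strict) comonoid homomorphisms. *)
Definition is_map (X Y : ob C) (f : hom C X Y) : Prop :=
  le (cmp (copy X) (tensm f f)) (cmp f (copy Y)) /\ le (disc X) (cmp f (disc Y)).

Definition peircean : Prop :=
  exists B : forall X Y : ob C, BoolAlgOn (@le C X Y),
    forall (X Y Z : ob C) (f : hom C X Y) (c : hom C Y Z),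
      is_map f -> cmp f (ba_neg (B Y Z) c) = ba_neg (B X Z) (cmp f c).

(* Finite products in Map(C): product X (x) Y, terminal object I. *)
Definition proj1 (X Y : ob C) : hom C (tens X Y) X :=
  cmp (tensm (idm X) (disc Y)) (run X).
Definition proj2 (X Y : ob C) : hom C (tens X Y) Y :=
  cmp (tensm (disc X) (idm Y)) (lun Y).

(* The functor C[-,I] : Map(C)^op -> InfSl, with P(X) = C[X,I] and
   P_f(c) = f ; c.  [infsl_functor mt tp] says that mt/tp are binary meets
   and top of the poset C[X,I] and that every P_f (f a map) preserves them. *)
Definition PI (X : ob C) := hom C X unit_ob.

Definition infsl_functor (mt : forall X, PI X -> PI X -> PI X) (tp : forall X, PI X) : Prop :=
  (forall X (a b : PI X), le (mt X a b) a /\ le (mt X a b) b /\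
     forall d : PI X, le d a -> le d b -> le d (mt X a b)) /\
  (forall X (a : PI X), le a (tp X)) /\
  (forall X Y (f : hom C X Y), is_map f ->
     (forall a b : PI Y, cmp f (mt Y a b) = mt X (cmp f a) (cmp f b)) /\
     cmp f (tp Y) = tp X).

(* Elementary: equality predicates delta_Y in P(Y x Y) such that
   alpha |-> P_<pi1,pi2>(alpha) /\ P_<pi2,pi3>(delta_Y) is left adjoint to
   P_{id_X x Delta_Y}, where X x Y x Y := (X (x) Y) (x) Y. *)
Definition elementary (mt : forall X, PI X -> PI X -> PI X) : Prop :=
  exists delta : forall Y, PI (tens Y Y),
    forall (X Y : ob C) (alpha : PI (tens X Y)) (beta : PI (tens (tens X Y) Y)),
      le (mt _ (cmp (proj1 (tens X Y) Y) alpha)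
               (cmp (tensm (proj2 X Y) (idm Y)) (delta Y))) beta
      <-> le alpha (cmp (cmp (tensm (idm X) (copy Y)) (asc_inv X Y Y)) beta).

(* Existential: left adjoints exists_pi -| P_pi along the projections
   pi : X x Y -> X, satisfying Beck-Chevalley and Frobenius reciprocity. *)
Definition existential (mt : forall X, PI X -> PI X -> PI X) : Prop :=
  exists ex : forall X Y : ob C, PI (tens X Y) -> PI X,
    (forall X Y (alpha : PI (tens X Y)) (beta : PI X),
        le (ex X Y alpha) beta <-> le alpha (cmp (proj1 X Y) beta)) /\
    (forall X X' Y (f : hom C X' X) (alpha : PI (tens X Y)),
        is_map f ->
        ex X' Y (cmp (tensm f (idm Y)) alpha) = cmp f (ex X Y alpha)) /\
    (forall X Y (alpha : PI (tens X Y)) (beta : PI X),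
        ex X Y (mt _ (cmp (proj1 X Y) beta) alpha) = mt X beta (ex X Y alpha)).

Definition boolean_fibres : Prop :=
  exists B : forall X : ob C, BoolAlgOn (@le C X unit_ob),
    forall X Y (f : hom C X Y), is_map f ->
      ba_hom (B Y) (B X) (fun c : PI Y => cmp f c).

Definition boolean_hyperdoctrine : Prop :=
  exists (mt : forall X, PI X -> PI X -> PI X) (tp : forall X, PI X),
    infsl_functor mt tp /\ elementary mt /\ existential mt /\ boolean_fibres.

End Doctrines.

(* Each object is self-dual through its Frobenius structure, with unit
   [codisc ; copy] and counit [cocopy ; disc]; hence C[X,Y] and C[X (x) Y, I]
   are isomorphic posets, naturally in maps X.  A Boolean algebra on the fibre
   C[X (x) Y, I] therefore transports to C[X,Y], and a negation preserved by
   pulling back along the map f (x) id transports to one satisfying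
   f ; ~c = ~(f ; c).
   Conversely, in a cartesian bicategory the fibre C[X,I] always has meets
   copy ; (a (x) b) and top disc, so any Boolean structure on it has these
   operations and maps pull back to Boolean homomorphisms.  Equality and the
   quantifiers come from the adjunctions id (x) copy -| id (x) cocopy and
   projection -| id (x) codisc; Frobenius reciprocity holds because pulling
   back along a left adjoint is a Boolean homomorphism that itself has a left
   adjoint. *)

From Stdlib Require Import Setoid.
Set Implicit Arguments.

Section BooleanAlgebra.
Variables (T : Type) (leT : T -> T -> Prop) (A : BoolAlgOn leT).
Local Notation "a ⊓ b" := (ba_meet A a b) (at level 40, left associativity).
Local Notation "a ⊔ b" := (ba_join A a b) (at level 50, left associativity).
Local Notation "¬ a" := (ba_neg A a) (at level 35, right associativity).
Local Notation top := (ba_top A).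
Local Notation bot := (ba_bot A).

Lemma ba_meetxx a : a ⊓ a = a.
Proof. rewrite <- (ba_join_absorb A a a) at 2. apply ba_meet_absorb. Qed.

Lemma ba_le_refl a : leT a a.
Proof. apply (ba_order A), ba_meetxx. Qed.

Lemma ba_le_trans a b c : leT a b -> leT b c -> leT a c.
Proof.
  rewrite !(ba_order A). intros Hab Hbc.
  rewrite <- Hab at 1. rewrite <- ba_meetA, Hbc, Hab. reflexivity.
Qed.

Lemma ba_le_anti a b : leT a b -> leT b a -> a = b.
Proof. rewrite !(ba_order A). intros Hab Hba. rewrite <- Hab, ba_meetC, Hba. reflexivity. Qed.

Lemma ba_meet_le_l a b : leT (a ⊓ b) a.
Proof. apply (ba_order A). rewrite ba_meetC, ba_meetA, ba_meetxx. reflexivity. Qed.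

Lemma ba_meet_le_r a b : leT (a ⊓ b) b.
Proof. apply (ba_order A). rewrite <- ba_meetA, ba_meetxx. reflexivity. Qed.

Lemma ba_le_meet a b x : leT x a -> leT x b -> leT x (a ⊓ b).
Proof. rewrite !(ba_order A). intros Ha Hb. rewrite ba_meetA, Ha, Hb. reflexivity. Qed.

Lemma ba_le_top a : leT a top.
Proof. apply (ba_order A), ba_meet_top. Qed.

Lemma ba_le_join_eq a b : leT a b <-> a ⊔ b = b.
Proof.
  rewrite (ba_order A). split; intro H.
  - rewrite <- H, ba_joinC, ba_meetC, ba_join_absorb. reflexivity.
  - rewrite <- H, ba_meet_absorb. reflexivity.
Qed.

Lemma ba_join_ge_l a b : leT a (a ⊔ b).
Proof. apply (ba_order A), ba_meet_absorb. Qed.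

Lemma ba_join_ge_r a b : leT b (a ⊔ b).
Proof. rewrite ba_joinC. apply ba_join_ge_l. Qed.

Lemma ba_join_le a b c : leT a c -> leT b c -> leT (a ⊔ b) c.
Proof. rewrite !ba_le_join_eq. intros Ha Hb. rewrite <- ba_joinA, Hb, Ha. reflexivity. Qed.

Lemma ba_meet_bot a : a ⊓ bot = bot.
Proof. rewrite <- (ba_compl_meet A a), ba_meetA, ba_meetxx. reflexivity. Qed.

Lemma ba_bot_join a : bot ⊔ a = a.
Proof. rewrite ba_joinC. apply ba_join_bot. Qed.

Lemma ba_join_top a : a ⊔ top = top.
Proof. apply ba_le_join_eq, ba_le_top. Qed.

Lemma ba_compl_unique a x : a ⊓ x = bot -> a ⊔ x = top -> x = ¬ a.
Proof.
  intros Hmeet Hjoin.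
  rewrite <- (ba_meet_top A x), <- (ba_compl_join A a), ba_meet_distr,
    (ba_meetC A x a), Hmeet, ba_bot_join.
  rewrite <- (ba_meet_top A (¬ a)) at 2.
  rewrite <- Hjoin, ba_meet_distr, (ba_meetC A (¬ a) a), ba_compl_meet, ba_bot_join.
  apply ba_meetC.
Qed.

Lemma ba_negK a : ¬ ¬ a = a.
Proof.
  symmetry. apply ba_compl_unique.
  - rewrite ba_meetC. apply ba_compl_meet.
  - rewrite ba_joinC. apply ba_compl_join.
Qed.

Lemma ba_neg_top : ¬ top = bot.
Proof.
  symmetry. apply ba_compl_unique.
  - rewrite ba_meetC. apply ba_meet_top.
  - apply ba_join_bot.
Qed.

Lemma ba_neg_meet a b : ¬ (a ⊓ b) = ¬ a ⊔ ¬ b.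
Proof.
  symmetry. apply ba_compl_unique.
  - rewrite ba_meet_distr, (ba_meetC A a b), <- (ba_meetA A b a), ba_compl_meet, ba_meet_bot,
      (ba_meetC A b a), <- ba_meetA, ba_compl_meet, ba_meet_bot, ba_join_bot.
    reflexivity.
  - rewrite ba_joinC, ba_join_distr, (ba_joinC A (¬ a ⊔ ¬ b) a), ba_joinA, ba_compl_join,
      (ba_joinC A top), ba_join_top, <- (ba_joinA A (¬ a) (¬ b) b), (ba_joinC A (¬ b) b),
      ba_compl_join, ba_join_top, ba_meet_top.
    reflexivity.
Qed.

Lemma ba_join_neg_meet a b : a ⊔ b = ¬ (¬ a ⊓ ¬ b).
Proof. rewrite ba_neg_meet, !ba_negK. reflexivity. Qed.

Lemma ba_shunt a b c : leT (a ⊓ b) c <-> leT b (¬ a ⊔ c).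
Proof.
  split; intro H.
  - rewrite <- (ba_meet_top A b), <- (ba_compl_join A a), ba_meet_distr, (ba_joinC A (¬ a) c).
    apply ba_join_le.
    + apply ba_le_trans with c; [rewrite ba_meetC; exact H | apply ba_join_ge_l].
    + apply ba_le_trans with (¬ a); [apply ba_meet_le_r | apply ba_join_ge_r].
  - apply ba_le_trans with (a ⊓ (¬ a ⊔ c)).
    + apply ba_le_meet; [apply ba_meet_le_l |].
      apply ba_le_trans with b; [apply ba_meet_le_r | exact H].
    + rewrite ba_meet_distr, ba_compl_meet, ba_bot_join. apply ba_meet_le_r.
Qed.

End BooleanAlgebra.

Section FrobeniusReciprocity.
Variables (T U : Type) (leT : T -> T -> Prop) (leU : U -> U -> Prop)
  (A : BoolAlgOn leT) (B : BoolAlgOn leU) (h : U -> T) (e : T -> U).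
Hypothesis h_join : forall b b', h (ba_join B b b') = ba_join A (h b) (h b').
Hypothesis h_neg : forall b, h (ba_neg B b) = ba_neg A (h b).
Hypothesis e_ladj_h : forall a b, leU (e a) b <-> leT a (h b).

Lemma ba_frobenius_ladj b a : e (ba_meet A (h b) a) = ba_meet B b (e a).
Proof.
  apply (ba_le_anti B).
  - apply (ba_le_meet B).
    + apply e_ladj_h, (ba_meet_le_l A).
    + apply e_ladj_h, (ba_le_trans A) with a; [apply (ba_meet_le_r A) |].
      apply e_ladj_h, (ba_le_refl B).
  - apply (ba_shunt B), e_ladj_h. rewrite h_join, h_neg.
    apply (ba_shunt A), e_ladj_h, (ba_le_refl B).
Qed.

End FrobeniusReciprocity.

Section Transport.
Variables (T U : Type) (leT : T -> T -> Prop) (leU : U -> U -> Prop) (B : BoolAlgOn leU)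
  (F : T -> U) (G : U -> T).
Hypothesis FK : forall t, G (F t) = t.
Hypothesis GK : forall u, F (G u) = u.
Hypothesis F_le : forall a b, leT a b <-> leU (F a) (F b).

Definition ba_transport : BoolAlgOn leT.
Proof.
  refine (@Build_BoolAlgOn T leT (fun a b => G (ba_meet B (F a) (F b)))
            (fun a b => G (ba_join B (F a) (F b))) (G (ba_top B)) (G (ba_bot B))
            (fun a => G (ba_neg B (F a))) _ _ _ _ _ _ _ _ _ _ _ _ _);
    intros; rewrite ?GK.
  - f_equal; apply ba_meetC.
  - f_equal; apply ba_joinC.
  - f_equal; apply ba_meetA.
  - f_equal; apply ba_joinA.
  - rewrite ba_meet_absorb, FK. reflexivity.
  - rewrite ba_join_absorb, FK. reflexivity.
  - f_equal; apply ba_meet_distr.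
  - f_equal; apply ba_join_distr.
  - rewrite ba_meet_top, FK. reflexivity.
  - rewrite ba_join_bot, FK. reflexivity.
  - f_equal; apply ba_compl_meet.
  - f_equal; apply ba_compl_join.
  - rewrite F_le, (ba_order B). split; intro H.
    + rewrite H, FK. reflexivity.
    + apply (f_equal F) in H. rewrite GK in H. exact H.
Defined.

End Transport.

Section CartesianBicategory.
Variable C : CartBicat.
Local Notation "f >> g" := (cmp f g) (at level 40, left associativity).
Local Notation "f ⊗ g" := (tensm f g) (at level 35).
Local Notation I := (@unit_ob C).

Lemma cmp_prefix2 {W X Y Z : ob C} {a : hom C X Y} {b : hom C Y Z} {c : hom C X Z} :
  a >> b = c -> forall k : hom C W X, k >> a >> b = k >> c.
Proof. intros H k. rewrite <- cmpA, H. reflexivity. Qed.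
Lemma cmp_prefix3 {W X Y Z V : ob C} {a : hom C X Y} {b : hom C Y Z} {c : hom C Z V} {d} :
  a >> b >> c = d -> forall k : hom C W X, k >> a >> b >> c = k >> d.
Proof. intros H k. rewrite <- H, !cmpA. reflexivity. Qed.
Lemma cmp_prefix4 {W X Y Z V U : ob C} {a : hom C X Y} {b : hom C Y Z} {c : hom C Z V}
  {e : hom C V U} {d} :
  a >> b >> c >> e = d -> forall k : hom C W X, k >> a >> b >> c >> e = k >> d.
Proof. intros H k. rewrite <- H, !cmpA. reflexivity. Qed.
Lemma cmp_prefix5 {W X Y Z V U T : ob C} {a : hom C X Y} {b : hom C Y Z} {c : hom C Z V}
  {e : hom C V U} {g : hom C U T} {d} :
  a >> b >> c >> e >> g = d -> forall k : hom C W X, k >> a >> b >> c >> e >> g = k >> d.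
Proof. intros H k. rewrite <- H, !cmpA. reflexivity. Qed.
Lemma cmp_prefix6 {W X Y Z V U T S : ob C} {a : hom C X Y} {b : hom C Y Z} {c : hom C Z V}
  {e : hom C V U} {g : hom C U T} {h : hom C T S} {d} :
  a >> b >> c >> e >> g >> h = d ->
  forall k : hom C W X, k >> a >> b >> c >> e >> g >> h = k >> d.
Proof. intros H k. rewrite <- H, !cmpA. reflexivity. Qed.

(* Composites are kept left-associated; [rw_chain H] rewrites with an equation
   whose left-hand side is a segment (of length up to 6) of a longer chain. *)
Ltac rw_chain H :=
  first [ rewrite (cmp_prefix6 H) | rewrite (cmp_prefix5 H) | rewrite (cmp_prefix4 H)
        | rewrite (cmp_prefix3 H) | rewrite (cmp_prefix2 H) | rewrite H ];
  repeat rewrite cmpA.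
Ltac rw_chain_r H := rw_chain (eq_sym H).
Ltac cmp_norm := repeat rewrite cmpA; repeat rewrite cmp_idl; repeat rewrite cmp_idr.

Lemma tensm_cmpl {X Y Z W : ob C} (f : hom C X Y) (g : hom C Y Z) :
  (f >> g) ⊗ idm W = (f ⊗ idm W) >> (g ⊗ idm W).
Proof. rewrite <- tensm_cmp, cmp_idl. reflexivity. Qed.

Lemma tensm_cmpr {X Y Z W : ob C} (f : hom C X Y) (g : hom C Y Z) :
  idm W ⊗ (f >> g) = (idm W ⊗ f) >> (idm W ⊗ g).
Proof. rewrite <- tensm_cmp, cmp_idl. reflexivity. Qed.

Lemma tensm_split_l {X Y X' Y' : ob C} (f : hom C X Y) (g : hom C X' Y') :
  f ⊗ g = (f ⊗ idm X') >> (idm Y ⊗ g).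
Proof. rewrite <- tensm_cmp, cmp_idl, cmp_idr. reflexivity. Qed.

Lemma tensm_split_r {X Y X' Y' : ob C} (f : hom C X Y) (g : hom C X' Y') :
  f ⊗ g = (idm X ⊗ g) >> (f ⊗ idm Y').
Proof. rewrite <- tensm_cmp, cmp_idl, cmp_idr. reflexivity. Qed.

Lemma tensm_interchange {X Y X' Y' : ob C} (f : hom C X Y) (g : hom C X' Y') :
  (f ⊗ idm X') >> (idm Y ⊗ g) = (idm X ⊗ g) >> (f ⊗ idm Y').
Proof. rewrite <- tensm_split_l, <- tensm_split_r. reflexivity. Qed.

Lemma tensm_slide {X X' A B A' B' : ob C} (f : hom C X X') (a : hom C A A') (b : hom C A' B')
  (b' : hom C A B) (a' : hom C B B') :
  a >> b = b' >> a' -> (f ⊗ a) >> (idm X' ⊗ b) = (idm X ⊗ b') >> (f ⊗ a').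
Proof. intro H. rewrite <- !tensm_cmp, cmp_idr, cmp_idl, H. reflexivity. Qed.

Lemma cmp_iso_cancel_l {X Y Z : ob C} (i : hom C X Y) (j : hom C Y X) (f g : hom C Y Z) :
  j >> i = idm Y -> i >> f = i >> g -> f = g.
Proof.
  intros Hji H. rewrite <- (cmp_idl f), <- (cmp_idl g), <- Hji, <- !cmpA, H. reflexivity.
Qed.

Lemma cmp_iso_cancel_r {X Y Z : ob C} (i : hom C Y Z) (j : hom C Z Y) (f g : hom C X Y) :
  i >> j = idm Y -> f >> i = g >> i -> f = g.
Proof.
  intros Hij H. rewrite <- (cmp_idr f), <- (cmp_idr g), <- Hij, !cmpA, H. reflexivity.
Qed.

Lemma tensm_unit_l_inj {X Y : ob C} (f g : hom C X Y) : idm I ⊗ f = idm I ⊗ g -> f = g.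
Proof.
  intro H. rewrite <- (cmp_idl f), <- (cmp_idl g), <- (lun_iso2 X), <- !cmpA,
    <- !lun_nat, H. reflexivity.
Qed.

Lemma tensm_unit_r_inj {X Y : ob C} (f g : hom C X Y) : f ⊗ idm I = g ⊗ idm I -> f = g.
Proof.
  intro H. rewrite <- (cmp_idl f), <- (cmp_idl g), <- (run_iso2 X), <- !cmpA,
    <- !run_nat, H. reflexivity.
Qed.

Lemma asc_inv_nat {X Y Z X' Y' Z' : ob C} (f : hom C X X') (g : hom C Y Y') (h : hom C Z Z') :
  (f ⊗ (g ⊗ h)) >> asc_inv X' Y' Z' = asc_inv X Y Z >> ((f ⊗ g) ⊗ h).
Proof.
  transitivity (asc_inv X Y Z >> asc X Y Z >> (f ⊗ (g ⊗ h)) >> asc_inv X' Y' Z').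
  - rewrite asc_iso2, cmp_idl. reflexivity.
  - rw_chain_r (asc_nat f g h). rw_chain (asc_iso1 X' Y' Z'). rewrite cmp_idr. reflexivity.
Qed.

Lemma run_inv_nat {X Y : ob C} (f : hom C X Y) : run_inv X >> (f ⊗ idm I) = f >> run_inv Y.
Proof.
  apply (@cmp_iso_cancel_r _ _ _ (run Y) (run_inv Y)); [apply run_iso1|].
  cmp_norm. rw_chain (run_nat f). rw_chain (run_iso2 X). rw_chain (run_iso2 Y).
  rewrite cmp_idl, cmp_idr. reflexivity.
Qed.

(* Kelly's consequences of the pentagon and triangle axioms. *)
Lemma asc_unit_lun {Y Z : ob C} : asc I Y Z >> lun (tens Y Z) = lun Y ⊗ idm Z.
Proof.
  apply tensm_unit_l_inj. rewrite tensm_cmpr.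
  apply (@cmp_iso_cancel_l _ _ _ ((asc I I Y ⊗ idm Z) >> asc I (tens I Y) Z)
           (asc_inv I (tens I Y) Z >> (asc_inv I I Y ⊗ idm Z))).
  - cmp_norm. rw_chain_r (tensm_cmpl (W:=Z) (asc_inv I I Y) (asc I I Y)).
    rewrite asc_iso2, tensm_id, cmp_idr, asc_iso2. reflexivity.
  - cmp_norm. rw_chain (pentagon I I Y Z). rw_chain (triangle I (tens Y Z)).
    rw_chain_r (asc_nat (idm I) (lun Y) (idm Z)).
    rw_chain_r (tensm_cmpl (W:=Z) (asc I I Y) (idm I ⊗ lun Y)). rewrite triangle.
    rewrite <- (tensm_id Y Z). rw_chain_r (asc_nat (run I) (idm Y) (idm Z)). reflexivity.
Qed.

Lemma asc_run_unit {X Y : ob C} : asc X Y I >> (idm X ⊗ run Y) = run (tens X Y).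
Proof.
  apply tensm_unit_r_inj. rewrite tensm_cmpl.
  apply (@cmp_iso_cancel_r _ _ _ (asc X Y I) (asc_inv X Y I)); [apply asc_iso1|].
  rw_chain (asc_nat (idm X) (run Y) (idm I)). rewrite <- (triangle Y I), tensm_cmpr. cmp_norm.
  rw_chain (pentagon X Y I I). rw_chain_r (asc_nat (idm X) (idm Y) (lun I)).
  rewrite tensm_id. rw_chain (triangle (tens X Y) I). reflexivity.
Qed.

Lemma lun_unit : lun I = run I.
Proof.
  assert (lun_tens : lun (tens I I) = idm I ⊗ lun I).
  { apply (@cmp_iso_cancel_r _ _ _ (lun I) (lun_inv I)); [apply lun_iso1|].
    rewrite lun_nat. reflexivity. }
  apply tensm_unit_r_inj. rewrite <- (triangle I I), <- lun_tens, asc_unit_lun. reflexivity.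
Qed.

Lemma asc_inv_run {X Y : ob C} : asc_inv X Y I >> run (tens X Y) = idm X ⊗ run Y.
Proof.
  rewrite <- asc_run_unit. cmp_norm. rw_chain (asc_iso2 X Y I). rewrite cmp_idl. reflexivity.
Qed.

Lemma triangle_inv {X Y : ob C} : (run_inv X ⊗ idm Y) >> asc X I Y = idm X ⊗ lun_inv Y.
Proof.
  transitivity ((run_inv X ⊗ idm Y) >> asc X I Y >> (idm X ⊗ lun Y) >> (idm X ⊗ lun_inv Y)).
  - rewrite <- (cmpA _ (idm X ⊗ lun Y)), <- tensm_cmpr, lun_iso1, tensm_id, cmp_idr.
    reflexivity.
  - rw_chain (triangle X Y). rewrite <- tensm_cmpl, run_iso2, tensm_id, cmp_idl. reflexivity.
Qed.

Lemma pentagon_asc_inv {X Y Z W : ob C} :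
  (asc_inv X Y Z ⊗ idm W) >> asc (tens X Y) Z W
  = asc X (tens Y Z) W >> (idm X ⊗ asc Y Z W) >> asc_inv X Y (tens Z W).
Proof.
  transitivity ((asc_inv X Y Z ⊗ idm W) >> asc (tens X Y) Z W >> asc X Y (tens Z W)
                >> asc_inv X Y (tens Z W)).
  - rw_chain (asc_iso1 X Y (tens Z W)). rewrite cmp_idr. reflexivity.
  - rw_chain_r (pentagon X Y Z W). rw_chain_r (tensm_cmpl (W:=W) (asc_inv X Y Z) (asc X Y Z)).
    rewrite asc_iso2, tensm_id, cmp_idl. reflexivity.
Qed.

Lemma sym_unit : sym I I = idm (tens I I).
Proof.
  rewrite <- (cmp_idl (sym I I)), <- (lun_iso1 I), <- cmpA, <- copy_unit, copy_comm,
    copy_unit, lun_iso1.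
  reflexivity.
Qed.

Lemma cmp_le_r {W X Y : ob C} (k : hom C W X) (a b : hom C X Y) :
  le a b -> le (k >> a) (k >> b).
Proof. intro H. apply cmp_mono; [apply le_refl | exact H]. Qed.

Lemma cmp_le_l {X Y Z : ob C} (a b : hom C X Y) (m : hom C Y Z) :
  le a b -> le (a >> m) (b >> m).
Proof. intro H. apply cmp_mono; [exact H | apply le_refl]. Qed.

Lemma cmp_le_mid {W X Y Z : ob C} (k : hom C W X) (a b : hom C X Y) (m : hom C Y Z) :
  le a b -> le (k >> a >> m) (k >> b >> m).
Proof. intro H. apply cmp_le_l, cmp_le_r, H. Qed.

Lemma le_of_eq {X Y : ob C} (a b : hom C X Y) : a = b -> le a b.
Proof. intros ->. apply le_refl. Qed.


Definition pmeet {X : ob C} (a b : hom C X I) : hom C X I := copy X >> (a ⊗ b) >> lun I.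

Lemma pred_le_disc {X : ob C} (a : hom C X I) : le a (disc X).
Proof. generalize (disc_lax a). rewrite disc_unit, cmp_idr. auto. Qed.

Lemma pmeetC {X : ob C} (a b : hom C X I) : pmeet a b = pmeet b a.
Proof.
  unfold pmeet. rewrite <- (copy_comm X) at 1. rw_chain_r (sym_nat b a).
  rewrite sym_unit, cmp_idr. reflexivity.
Qed.

Lemma pmeet_le_r {X : ob C} (a b : hom C X I) : le (pmeet a b) b.
Proof.
  unfold pmeet. apply le_trans with (copy X >> (disc X ⊗ b) >> lun I).
  - apply cmp_le_mid, tensm_mono; [apply pred_le_disc | apply le_refl].
  - apply le_of_eq. rewrite tensm_split_l. cmp_norm. rw_chain (lun_nat b).
    rw_chain (copy_unitl X). apply cmp_idl.
Qed.

Lemma pmeet_le_l {X : ob C} (a b : hom C X I) : le (pmeet a b) a.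
Proof. rewrite pmeetC. apply pmeet_le_r. Qed.

Lemma le_pmeet {X : ob C} (a b d : hom C X I) : le d a -> le d b -> le d (pmeet a b).
Proof.
  intros Ha Hb. apply le_trans with (d >> copy I >> lun I).
  - apply le_of_eq. rewrite copy_unit, <- cmpA, lun_iso2, cmp_idr. reflexivity.
  - apply le_trans with (copy X >> (d ⊗ d) >> lun I).
    + apply cmp_le_l, copy_lax.
    + apply cmp_le_mid, tensm_mono; assumption.
Qed.

Lemma pmeet_disc {X : ob C} (a : hom C X I) : pmeet a (disc X) = a.
Proof.
  apply le_antisym; [apply pmeet_le_l | apply le_pmeet; [apply le_refl | apply pred_le_disc]].
Qed.

Lemma map_copy_eq {X Y : ob C} (f : hom C X Y) : is_map f -> f >> copy Y = copy X >> (f ⊗ f).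
Proof. intros [Hcopy _]. apply le_antisym; [apply copy_lax | exact Hcopy]. Qed.

Lemma map_disc_eq {X Y : ob C} (f : hom C X Y) : is_map f -> f >> disc Y = disc X.
Proof. intros [_ Hdisc]. apply le_antisym; [apply disc_lax | exact Hdisc]. Qed.

Lemma map_pmeet {X Y : ob C} (f : hom C X Y) (a b : hom C Y I) :
  is_map f -> f >> pmeet a b = pmeet (f >> a) (f >> b).
Proof.
  intro Hf. unfold pmeet. cmp_norm. rw_chain (map_copy_eq Hf). rewrite tensm_cmp. cmp_norm.
  reflexivity.
Qed.

Lemma pmeet_infsl : infsl_functor (fun X => @pmeet X) disc.
Proof.
  split; [| split].
  - intros X a b. split; [apply pmeet_le_l | split; [apply pmeet_le_r | intro d; apply le_pmeet]].
  - intros. apply pred_le_disc.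
  - intros X Y f Hf. split; [intros; apply map_pmeet, Hf | apply map_disc_eq, Hf].
Qed.

Definition shuffle (X Y : ob C) :
  hom C (tens (tens X X) (tens Y Y)) (tens (tens X Y) (tens X Y)) :=
  asc X X (tens Y Y) >> ((idm X ⊗ asc_inv X Y Y) >> ((idm X ⊗ (sym X Y ⊗ idm Y)) >>
  ((idm X ⊗ asc Y X Y) >> asc_inv X Y (tens X Y)))).

Lemma copy_tens_shuffle (X Y : ob C) : copy (tens X Y) = (copy X ⊗ copy Y) >> shuffle X Y.
Proof. apply copy_tens. Qed.

Lemma shuffle_nat {X Y X' Y' : ob C} (f : hom C X X') (g : hom C Y Y') :
  ((f ⊗ f) ⊗ (g ⊗ g)) >> shuffle X' Y' = shuffle X Y >> ((f ⊗ g) ⊗ (f ⊗ g)).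
Proof.
  unfold shuffle. cmp_norm.
  rw_chain (asc_nat f f (g ⊗ g)).
  rw_chain (tensm_slide f _ _ _ _ (asc_inv_nat f g g)).
  assert (sym_whisker :
    ((f ⊗ g) ⊗ g) >> (sym X' Y' ⊗ idm Y') = (sym X Y ⊗ idm Y) >> ((g ⊗ f) ⊗ g)).
  { rewrite <- !tensm_cmp, sym_nat, cmp_idl, cmp_idr. reflexivity. }
  rw_chain (tensm_slide f _ _ _ _ sym_whisker).
  rw_chain (tensm_slide f _ _ _ _ (asc_nat g f g)).
  rw_chain (asc_inv_nat f g (f ⊗ g)). reflexivity.
Qed.

Lemma map_tensm {X Y X' Y' : ob C} (f : hom C X X') (g : hom C Y Y') :
  is_map f -> is_map g -> is_map (f ⊗ g).
Proof.
  intros Hf Hg. split.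
  - rewrite (copy_tens_shuffle X Y), (copy_tens_shuffle X' Y'). cmp_norm.
    rw_chain_r (shuffle_nat f g). apply cmp_le_l, le_of_eq.
    rewrite <- tensm_cmp, <- (map_copy_eq Hf), <- (map_copy_eq Hg), tensm_cmp. reflexivity.
  - apply le_of_eq. rewrite !disc_tens. cmp_norm.
    rewrite <- tensm_cmp, (map_disc_eq Hf), (map_disc_eq Hg). reflexivity.
Qed.

Definition ladj {X Y : ob C} (f : hom C X Y) (g : hom C Y X) : Prop :=
  le (idm X) (f >> g) /\ le (g >> f) (idm Y).

Lemma ladj_is_map {X Y : ob C} (f : hom C X Y) (g : hom C Y X) : ladj f g -> is_map f.
Proof.
  intros [Hunit Hcounit]. split.
  - apply le_trans with (f >> g >> copy X >> (f ⊗ f)).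
    + rewrite <- (cmp_idl (copy X)) at 1. apply cmp_le_l, cmp_le_l, Hunit.
    + apply le_trans with (f >> copy Y >> (g ⊗ g) >> (f ⊗ f)).
      * apply cmp_le_l. rewrite <- !cmpA. apply cmp_le_r, copy_lax.
      * rewrite <- cmpA, <- tensm_cmp. rewrite <- (cmp_idr (f >> copy Y)) at 2.
        rewrite <- tensm_id. apply cmp_le_r, tensm_mono; exact Hcounit.
  - apply le_trans with (f >> g >> disc X).
    + rewrite <- (cmp_idl (disc X)) at 1. apply cmp_le_l, Hunit.
    + rewrite <- cmpA. apply cmp_le_r, disc_lax.
Qed.

Lemma ladj_cmp {X Y Z : ob C} (f : hom C X Y) (g : hom C Y X) (f' : hom C Y Z) (g' : hom C Z Y) :
  ladj f g -> ladj f' g' -> ladj (f >> f') (g' >> g).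
Proof.
  intros [Hunit Hcounit] [Hunit' Hcounit']. split.
  - apply le_trans with (f >> g); [exact Hunit|].
    replace (f >> f' >> (g' >> g)) with (f >> (f' >> g') >> g) by (rewrite !cmpA; reflexivity).
    rewrite <- (cmp_idr f) at 1. apply cmp_le_mid, Hunit'.
  - apply le_trans with (g' >> f'); [|exact Hcounit'].
    replace (g' >> g >> (f >> f')) with (g' >> (g >> f) >> f') by (rewrite !cmpA; reflexivity).
    rewrite <- (cmp_idr g') at 2. apply cmp_le_mid, Hcounit.
Qed.

Lemma ladj_tensm {X Y X' Y' : ob C} (f : hom C X Y) (g : hom C Y X)
  (f' : hom C X' Y') (g' : hom C Y' X') :
  ladj f g -> ladj f' g' -> ladj (f ⊗ f') (g ⊗ g').
Proof.
  intros [Hunit Hcounit] [Hunit' Hcounit'].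
  split; rewrite <- tensm_cmp, <- tensm_id; apply tensm_mono; assumption.
Qed.

Lemma ladj_iso {X Y : ob C} (f : hom C X Y) (g : hom C Y X) :
  f >> g = idm X -> g >> f = idm Y -> ladj f g.
Proof. intros Hfg Hgf. split; apply le_of_eq; auto. Qed.

Lemma ladj_id {X : ob C} : ladj (idm X) (idm X).
Proof. apply ladj_iso; apply cmp_idl. Qed.

Lemma ladj_pred_le {X Y : ob C} (f : hom C X Y) (g : hom C Y X) (a : hom C X I) (b : hom C Y I) :
  ladj f g -> (le (g >> a) b <-> le a (f >> b)).
Proof.
  intros [Hunit Hcounit]. split; intro H.
  - apply le_trans with (f >> g >> a).
    + rewrite <- (cmp_idl a) at 1. apply cmp_le_l, Hunit.
    + rewrite <- cmpA. apply cmp_le_r, H.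
  - apply le_trans with (g >> f >> b).
    + rewrite <- cmpA. apply cmp_le_r, H.
    + rewrite <- (cmp_idl b) at 2. apply cmp_le_l, Hcounit.
Qed.

Definition coproj1 (X Y : ob C) : hom C X (tens X Y) := run_inv X >> (idm X ⊗ codisc Y).

Lemma ladj_proj1 {X Y : ob C} : ladj (proj1 X Y) (coproj1 X Y).
Proof.
  apply ladj_cmp.
  - apply ladj_tensm; [apply ladj_id | split; [apply adj_disc_unit | apply adj_disc_counit]].
  - apply ladj_iso; [apply run_iso1 | apply run_iso2].
Qed.

Definition dup_r (X Y : ob C) : hom C (tens X Y) (tens (tens X Y) Y) :=
  (idm X ⊗ copy Y) >> asc_inv X Y Y.
Definition codup_r (X Y : ob C) : hom C (tens (tens X Y) Y) (tens X Y) :=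
  asc X Y Y >> (idm X ⊗ cocopy Y).

Lemma ladj_dup_r {X Y : ob C} : ladj (dup_r X Y) (codup_r X Y).
Proof.
  apply ladj_cmp.
  - apply ladj_tensm; [apply ladj_id | split; [apply adj_copy_unit | apply adj_copy_counit]].
  - apply ladj_iso; [apply asc_iso2 | apply asc_iso1].
Qed.

Definition cap (Y : ob C) : hom C (tens Y Y) I := cocopy Y >> disc Y.
Definition cup (Y : ob C) : hom C I (tens Y Y) := codisc Y >> copy Y.

Lemma dup_r_proj1 {X Y : ob C} : dup_r X Y >> proj1 (tens X Y) Y = idm (tens X Y).
Proof.
  unfold dup_r, proj1. cmp_norm. rewrite <- (tensm_id X Y).
  rw_chain_r (asc_inv_nat (idm X) (idm Y) (disc Y)). rw_chain (@asc_inv_run X Y).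
  rewrite <- !tensm_cmpr. cmp_norm. rewrite copy_unitr. reflexivity.
Qed.

Lemma codup_r_disc {X Y : ob C} :
  codup_r X Y >> disc (tens X Y) = (proj2 X Y ⊗ idm Y) >> cap Y.
Proof.
  unfold codup_r, proj2, cap. rewrite disc_tens. cmp_norm.
  rw_chain_r (tensm_cmp (idm X) (disc X) (cocopy Y) (disc Y)). rewrite cmp_idl.
  rewrite (tensm_split_l (disc X) (cocopy Y >> disc Y)). cmp_norm.
  rw_chain (lun_nat (cocopy Y >> disc Y)). rewrite <- (tensm_id Y Y).
  rw_chain_r (asc_nat (disc X) (idm Y) (idm Y)). rw_chain (@asc_unit_lun Y Y).
  rewrite tensm_cmpl. cmp_norm. reflexivity.
Qed.


Definition to_pred {X Y : ob C} (c : hom C X Y) : hom C (tens X Y) I := (c ⊗ idm Y) >> cap Y.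
Definition of_pred {X Y : ob C} (d : hom C (tens X Y) I) : hom C X Y :=
  run_inv X >> (idm X ⊗ cup Y) >> asc_inv X Y Y >> (d ⊗ idm Y) >> lun Y.

Lemma snake_l {Y : ob C} :
  run_inv Y >> (idm Y ⊗ cup Y) >> asc_inv Y Y Y >> (cap Y ⊗ idm Y) >> lun Y = idm Y.
Proof.
  unfold cup, cap. rewrite tensm_cmpr, tensm_cmpl. cmp_norm.
  rw_chain_r (frobenius_l Y). rw_chain (cocopy_unitr Y). rewrite cmp_idl.
  rw_chain (copy_unitl Y). reflexivity.
Qed.

Lemma snake_r {Y : ob C} :
  lun_inv Y >> (cup Y ⊗ idm Y) >> asc Y Y Y >> (idm Y ⊗ cap Y) >> run Y = idm Y.
Proof.
  unfold cup, cap. rewrite tensm_cmpr, tensm_cmpl. cmp_norm.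
  rw_chain_r (frobenius_r Y). rw_chain (cocopy_unitl Y). rewrite cmp_idl.
  rw_chain (copy_unitr Y). reflexivity.
Qed.

Lemma snake_r_whisker {X Y : ob C} :
  (run_inv X ⊗ idm Y) >> ((idm X ⊗ cup Y) ⊗ idm Y) >> (asc_inv X Y Y ⊗ idm Y)
  >> asc (tens X Y) Y Y >> (idm (tens X Y) ⊗ cap Y) >> run (tens X Y) = idm (tens X Y).
Proof.
  rw_chain (@pentagon_asc_inv X Y Y Y). rewrite <- (tensm_id X Y) at 1.
  rw_chain_r (asc_inv_nat (idm X) (idm Y) (cap Y)). rw_chain (@asc_inv_run X Y).
  rw_chain (asc_nat (idm X) (cup Y) (idm Y)). rw_chain (@triangle_inv X Y).
  rewrite <- !tensm_cmpr. cmp_norm. rewrite snake_r, tensm_id. reflexivity.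
Qed.

Lemma to_predK {X Y : ob C} (c : hom C X Y) : of_pred (to_pred c) = c.
Proof.
  unfold of_pred, to_pred. rewrite tensm_cmpl. cmp_norm.
  rw_chain_r (asc_inv_nat c (idm Y) (idm Y)). rewrite tensm_id.
  rw_chain_r (tensm_interchange c (cup Y)). rw_chain (run_inv_nat c).
  rw_chain (@snake_l Y). apply cmp_idr.
Qed.

Lemma of_predK {X Y : ob C} (d : hom C (tens X Y) I) : to_pred (of_pred d) = d.
Proof.
  unfold of_pred, to_pred. rewrite !tensm_cmpl. cmp_norm.
  rewrite <- asc_unit_lun. cmp_norm. rw_chain (asc_nat d (idm Y) (idm Y)). rewrite tensm_id.
  rw_chain_r (lun_nat (cap Y)). rw_chain (tensm_interchange d (cap Y)). rewrite lun_unit.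
  rw_chain (run_nat d). rw_chain (@snake_r_whisker X Y). apply cmp_idl.
Qed.

Lemma to_pred_nat {X Y Z : ob C} (f : hom C X Y) (c : hom C Y Z) :
  to_pred (f >> c) = (f ⊗ idm Z) >> to_pred c.
Proof. unfold to_pred. rewrite tensm_cmpl. cmp_norm. reflexivity. Qed.

Lemma of_pred_nat {X Y Z : ob C} (f : hom C X Y) (d : hom C (tens Y Z) I) :
  f >> of_pred d = of_pred ((f ⊗ idm Z) >> d).
Proof. rewrite <- (to_predK (f >> of_pred d)), to_pred_nat, of_predK. reflexivity. Qed.

Lemma to_pred_le {X Y : ob C} (c c' : hom C X Y) : le c c' <-> le (to_pred c) (to_pred c').
Proof.
  split; intro H.
  - apply cmp_le_l, tensm_mono; [exact H | apply le_refl].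
  - rewrite <- (to_predK c), <- (to_predK c').
    apply cmp_le_l, cmp_le_r, tensm_mono; [exact H | apply le_refl].
Qed.

Lemma peircean_of_boolean_fibres : boolean_fibres C -> peircean C.
Proof.
  intros [B B_hom].
  exists (fun X Y => ba_transport (@le C X Y) (B (tens X Y)) (@to_pred X Y) (@of_pred X Y)
                                 (@to_predK X Y) (@of_predK X Y) (@to_pred_le X Y)).
  intros X Y Z f c Hf.
  change (f >> of_pred (ba_neg (B (tens Y Z)) (to_pred c))
          = of_pred (ba_neg (B (tens X Z)) (to_pred (f >> c)))).
  destruct (B_hom _ _ _ (map_tensm Hf (ladj_is_map (@ladj_id Z)))) as (_ & _ & _ & _ & B_neg).
  rewrite to_pred_nat, <- B_neg. apply of_pred_nat.
Qed.

Section NegationStableFibres.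
Variable B : forall X : ob C, BoolAlgOn (@le C X I).
Hypothesis map_neg : forall X Y (f : hom C X Y) (c : hom C Y I),
  is_map f -> f >> ba_neg (B Y) c = ba_neg (B X) (f >> c).

Lemma fibre_meet {X : ob C} (a b : hom C X I) : ba_meet (B X) a b = pmeet a b.
Proof.
  apply (ba_le_anti (B X)).
  - apply le_pmeet; [apply (ba_meet_le_l (B X)) | apply (ba_meet_le_r (B X))].
  - apply (ba_le_meet (B X)); [apply pmeet_le_l | apply pmeet_le_r].
Qed.

Lemma fibre_top {X : ob C} : ba_top (B X) = disc X.
Proof. apply (ba_le_anti (B X)); [apply pred_le_disc | apply (ba_le_top (B X))]. Qed.

Lemma fibre_map_hom {X Y : ob C} (f : hom C X Y) :
  is_map f -> ba_hom (B Y) (B X) (fun c => f >> c).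
Proof.
  intro Hf.
  assert (f_meet : forall a b, f >> ba_meet (B Y) a b = ba_meet (B X) (f >> a) (f >> b)).
  { intros. rewrite !fibre_meet. apply map_pmeet, Hf. }
  split; [exact f_meet | split; [| split; [| split]]].
  - intros a b. rewrite (ba_join_neg_meet (B Y)), (ba_join_neg_meet (B X)),
      (map_neg _ Hf), f_meet, !(map_neg _ Hf).
    reflexivity.
  - rewrite !fibre_top. apply map_disc_eq, Hf.
  - rewrite <- (ba_neg_top (B Y)), <- (ba_neg_top (B X)), (map_neg _ Hf), !fibre_top,
      (map_disc_eq Hf).
    reflexivity.
  - intro a. apply map_neg, Hf.
Qed.

Lemma pmeet_frobenius_ladj {X Y : ob C} (f : hom C X Y) (g : hom C Y X)
  (b : hom C Y I) (a : hom C X I) :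
  ladj f g -> g >> pmeet (f >> b) a = pmeet b (g >> a).
Proof.
  intro Hfg. rewrite <- !fibre_meet.
  destruct (fibre_map_hom (ladj_is_map Hfg)) as (_ & f_join & _ & _ & f_neg).
  apply (ba_frobenius_ladj (B X) (B Y) (fun c => f >> c) (fun c => g >> c) f_join f_neg).
  intros; apply ladj_pred_le, Hfg.
Qed.

Lemma pmeet_elementary : elementary (fun X => @pmeet X).
Proof.
  exists cap. intros X Y alpha beta.
  assert (meet_eq : pmeet (proj1 (tens X Y) Y >> alpha) ((proj2 X Y ⊗ idm Y) >> cap Y)
                    = codup_r X Y >> alpha).
  { rewrite <- codup_r_disc, <- (pmeet_frobenius_ladj _ _ ladj_dup_r), cmpA, dup_r_proj1,
      cmp_idl, pmeet_disc.
    reflexivity. }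
  rewrite meet_eq. apply ladj_pred_le, ladj_dup_r.
Qed.

Lemma pmeet_existential : existential (fun X => @pmeet X).
Proof.
  exists (fun X Y alpha => coproj1 X Y >> alpha). split; [| split].
  - intros. apply ladj_pred_le, ladj_proj1.
  - intros X X' Y f alpha _. unfold coproj1. cmp_norm.
    rw_chain_r (tensm_interchange f (codisc Y)). rw_chain (run_inv_nat f). reflexivity.
  - intros X Y alpha beta. apply pmeet_frobenius_ladj, ladj_proj1.
Qed.

End NegationStableFibres.

Lemma boolean_hyperdoctrine_of_peircean : peircean C -> boolean_hyperdoctrine C.
Proof.
  intros [B B_neg].
  pose proof (fun X Y => B_neg X Y I) as map_neg.
  exists (fun X => @pmeet X), disc.
  split; [apply pmeet_infsl | split; [| split]].
  - exact (pmeet_elementary _ map_neg).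
  - exact (pmeet_existential _ map_neg).
  - exists (fun X => B X I). intros X Y f. exact (fibre_map_hom _ map_neg (f:=f)).
Qed.

End CartesianBicategory.

Theorem corollary28 (C : CartBicat) : peircean C <-> boolean_hyperdoctrine C.
Proof.
  split.
  - apply boolean_hyperdoctrine_of_peircean.
  - intros (_ & _ & _ & _ & _ & fibres). exact (peircean_of_boolean_fibres fibres).
Qed.
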